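(* Let $(H,\prec,\cdot,\succ,\Delta)$ be a $q$-tridendriform bialgebra and let $M_{1n}$ be the brace operations associated to the dendriform algebra $(H,\prec,q\,\cdot+\succ)$. If $x,y,z_1,\dots,z_n\in H$ are primitive, then $M_{1n}(x;z_1,\dots,z_n)$ and $x\cdot y$ are primitive. Consequently the subspace $\mathrm{Prim}(H)$ of primitive elements is a sub-$GV_q$-algebra of $(H,M_{1n},\cdot)$.
   Context: $q$-tridendriform algebra: a vector space $H$ with bilinear $\prec,\cdot,\succ$ satisfying (1) $(a\prec b)\prec c=a\prec(b\prec c+b\succ c+q\,b\cdot c)$; (2) $(a\succ b)\prec c=a\succ(b\prec c)$; (3) $(a\prec b+a\succ b+q\,a\cdot b)\succ c=a\succ(b\succ c)$; (4) $(a\cdot b)\cdot c=a\cdot(b\cdot c)$; (5) $(a\succ b)\cdot c=a\succ(b\cdot c)$; (6) $(a\prec b)\cdot c=a\cdot(b\succ c)$; (7) $(a\cdot b)\prec c=a\cdot(b\prec c)$. Put $*:=\prec+q\,\cdot+\succ$. Unit conventions: $H_+:=H\oplus\mathbb{K}1$, $\epsilon:H_+\to\mathbb{K}$ the projection onto $\mathbb{K}$; for $x\in H$: $x\succ1=x\cdot1=1\cdot x=1\prec x=0$, $1\succ x=x=x\prec1$, $1*x=x*1=x$; moreover in tensor expressions one sets $(x*y)\otimes(1\succ1):=(x\succ y)\otimes1$, $(x*y)\otimes(1\cdot1):=(x\cdot y)\otimes1$, $(x*y)\otimes(1\prec1):=(x\prec y)\otimes1$. A $q$-tridendriform bialgebra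 is a $q$-tridendriform algebra $H$ with a linear map $\Delta:H_+\to H_+\otimes H_+$ such that $\Delta(1)=1\otimes1$, $(\epsilon\otimes\mathrm{Id})\Delta(x)=1\otimes x$, $(\mathrm{Id}\otimes\epsilon)\Delta(x)=x\otimes1$, and $\Delta(x\circ y)=\sum(x_{(1)}*y_{(1)})\otimes(x_{(2)}\circ y_{(2)})$ for $\circ\in\{\succ,\cdot,\prec\}$ and $x,y\in H$, where $\Delta(x)=\sum x_{(1)}\otimes x_{(2)}$ in $H_+\otimes H_+$. An element $x\in H$ is primitive if $\Delta(x)=x\otimes1+1\otimes x$. Brace operations of the dendriform algebra $(H,\prec,\tilde\succ)$, $\tilde\succ=q\,\cdot+\succ$: $\omega_\prec(y_1,\dots,y_i)=y_1\prec(y_2\prec(\cdots\prec y_i))$, $\omega_{\tilde\succ}(y_{i+1},\dots,y_n)=((y_{i+1}\tilde\succ y_{i+2})\tilde\succ\cdots)\tilde\succ y_n$, empty $\omega=1$; $M_{10}=\mathrm{Id}$ and $M_{1n}(x;y_1,\dots,y_n)=\sum_{i=0}^n(-1)^{n-i}(\omega_\prec(y_1,\dots,y_i)\tilde\succ x)\prec\omega_{\tilde\succ}(y_{i+1},\dots,y_n)$. A $GV_q$ algebra is a brace algebra $(B,M_{1n})$ with an associative product $\cdot$ satisfying $M_{1n}(x\cdot y;z_1,\dots,z_n)=\sum_{0\le i\le j\le n}q^{j-i}M_{1i}(x;z_1,\dots,z_i)\cdot z_{i+1}\cdots z_j\cdot M_{1(n-j)}(y;z_{j+1},\dots,z_n)$;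 $(H,M_{1n},\cdot)$ is a $GV_q$ algebra. *)

From HB Require Import structures.
From mathcomp Require Import all_boot all_order all_algebra.
Set Implicit Arguments. Unset Strict Implicit. Unset Printing Implicit Defensive.
Import GRing.Theory.
Local Open Scope ring_scope.

Section QTridendriform.
Variables (K : fieldType) (H : lmodType K) (q : K).
Variables (prec dot succ : H -> H -> H).

Definition qstar (a b : H) : H := prec a b + q *: dot a b + succ a b.
Definition tsucc (a b : H) : H := q *: dot a b + succ a b.

Definition bilinear_op (op : H -> H -> H) : Prop :=
  (forall a, linear (op a)) /\ (forall b, linear (op^~ b)).

Record qtridendriform : Prop := QTri {
  qt_bil_prec : bilinear_op prec;
  qt_bil_dot  : bilinear_op dot;
  qt_bil_succ : bilinear_op succ;
  qt_ax1 : forall a b c, prec (prec a b) c = prec a (prec b c + succ b c + q *: dot b c);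
  qt_ax2 : forall a b c, prec (succ a b) c = succ a (prec b c);
  qt_ax3 : forall a b c, succ (prec a b + succ a b + q *: dot a b) c = succ a (succ b c);
  qt_ax4 : forall a b c, dot (dot a b) c = dot a (dot b c);
  qt_ax5 : forall a b c, dot (succ a b) c = succ a (dot b c);
  qt_ax6 : forall a b c, dot (prec a b) c = dot a (succ b c);
  qt_ax7 : forall a b c, prec (dot a b) c = dot a (prec b c)
}.

(* Augmentation H_+ = K 1 (+) H ; an element (c, x) stands for c 1 + x. *)
Definition Hp : Type := (K^o * H)%type.
Definition unit1 : Hp := (1 : K^o, 0).
Definition inj (x : H) : Hp := (0 : K^o, x).
Definition eps (a : Hp) : K := a.1.

(* Extensions of the products to H_+ following the unit conventions:
   1 * x = x * 1 = x, 1 > x = x, x > 1 = 0, x < 1 = x, 1 < x = 0,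
   x . 1 = 1 . x = 0.  The undefined values 1 o 1 are never used
   (they only occur through the convention on tensors, handled below). *)
Definition starp (a b : Hp) : Hp :=
  ((a.1 : K) * b.1 : K^o, (a.1 : K) *: b.2 + (b.1 : K) *: a.2 + qstar a.2 b.2).
Definition succp (a b : Hp) : H := succ a.2 b.2 + (a.1 : K) *: b.2.
Definition dotp  (a b : Hp) : H := dot a.2 b.2.
Definition precp (a b : Hp) : H := prec a.2 b.2 + (b.1 : K) *: a.2.

(* Elements of H_+ (x) H_+ are represented by finite formal sums of simple
   tensors; equality in the tensor product is given by its universal
   property: two formal sums are equal iff every bilinear map agrees. *)
Definition tens := seq (Hp * Hp).

Definition tens_eq (s t : tens) : Prop :=
  forall (U : lmodType K) (f : Hp -> Hp -> U),
    (forall v, linear (f v)) -> (forall w, linear (f^~ w)) ->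
    \sum_(p <- s) f p.1 p.2 = \sum_(p <- t) f p.1 p.2.

Definition tens_scale (c : K) (s : tens) : tens := [seq (c *: p.1, p.2) | p <- s].

(* Contribution of simple tensors (a1 (x) a2), (b1 (x) b2) to
   Delta(x o y) = sum (x(1) * y(1)) (x) (x(2) o y(2)), with the convention
   (x * y) (x) (1 o 1) := (x o y) (x) 1. *)
Definition coprod_term (opp : Hp -> Hp -> H) (u v : Hp * Hp) : tens :=
  [:: (starp u.1 v.1, inj (opp u.2 v.2));
      (((u.2.1 : K) * (v.2.1 : K)) *: inj (opp u.1 v.1), unit1)].

Definition coprod (opp : Hp -> Hp -> H) (s t : tens) : tens :=
  flatten [seq coprod_term opp u v | u <- s, v <- t].

Record qtri_bialgebra (Delta : Hp -> tens) : Prop := QTriBialg {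
  qb_linear : forall (c : K) (u v : Hp),
      tens_eq (Delta (c *: u + v)) (tens_scale c (Delta u) ++ Delta v);
  qb_unit : tens_eq (Delta unit1) [:: (unit1, unit1)];
  qb_counit_l : forall x : H,
      \sum_(p <- Delta (inj x)) eps p.1 *: p.2 = inj x;
  qb_counit_r : forall x : H,
      \sum_(p <- Delta (inj x)) eps p.2 *: p.1 = inj x;
  qb_succ : forall x y : H,
      tens_eq (Delta (inj (succ x y))) (coprod succp (Delta (inj x)) (Delta (inj y)));
  qb_dot : forall x y : H,
      tens_eq (Delta (inj (dot x y))) (coprod dotp (Delta (inj x)) (Delta (inj y)));
  qb_prec : forall x y : H,
      tens_eq (Delta (inj (prec x y))) (coprod precp (Delta (inj x)) (Delta (inj y)))
}.

Definition primitive (Delta : Hp -> tens) (x : H) : Prop :=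
  tens_eq (Delta (inj x)) [:: (inj x, unit1); (unit1, inj x)].

Fixpoint wprec (y : H) (ys : seq H) : H :=
  if ys is z :: zs then prec y (wprec z zs) else y.
Definition wsucc (y : H) (ys : seq H) : H := foldl tsucc y ys.

(* (omega_<(y1..yi) ~> x) < omega_~>(y(i+1)..yn), with empty omega = 1 *)
Definition brace_term (x : H) (ys : seq H) (i : nat) : H :=
  let l := take i ys in
  let r := drop i ys in
  let left := if l is y :: l' then tsucc (wprec y l') x else x in
  if r is z :: r' then prec left (wsucc z r') else left.

Definition M1n (x : H) (ys : seq H) : H :=
  \sum_(i < (size ys).+1) (-1) ^+ (size ys - i) *: brace_term x ys i.

End QTridendriform.

From Pilot Require Import Defs.
From HB Require Import structures.
From mathcomp Require Import all_boot all_order all_algebra zify.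
Import GRing.Theory.
Set Implicit Arguments. Unset Strict Implicit. Unset Printing Implicit Defensive.
Local Open Scope ring_scope.

(* By the unit conventions, the compatibility of Δ with
   [<], [.], [>] and [~> = q . + >] extends from H to H_+ = K 1 + H.  For primitive
   z_1, ..., z_n it then gives the deconcatenation coproducts
     Δ ω_<(z_1..z_k) = sum_j ω_<(z_(j+1)..z_k) ⊗ ω_<(z_1..z_j),
     Δ ω_~>(z_1..z_k) = sum_j ω_~>(z_1..z_j) ⊗ ω_~>(z_(j+1)..z_k),
   and hence, for the brace term b_i = (ω_<(z_1..z_i) ~> x) < ω_~>(z_(i+1)..z_n),
     Δ b_i = b_i ⊗ 1
       + sum_(j <= i <= m) ω_<(z_(j+1)..z_i) * ω_~>(z_(i+1)..z_m) ⊗ c_(j,m),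
   where c_(j,m) = (ω_<(z_1..z_j) ~> x) < ω_~>(z_(m+1)..z_n) does not depend on i.
   Split * = < + ~> in the alternating sum over i of the left factors: by
   relation (1) its [<] part is z_(j+1) < (the sum for z_(j+2)..z_m), and by
   relation (3) its [~>] part is -(the sum for z_(j+1)..z_(m-1)) ~> z_m, so by
   induction the sum vanishes unless j = m.  As c_(j,j) = b_j, what survives is
   1 ⊗ M_1n(x; z).  For x . y, the conventions x . 1 = 1 . x = 0 kill all the
   cross terms. *)

Section Bilinear.
Variable K : fieldType.

Section LinearFun.
Variables (U V : lmodType K) (f : U -> V).
Hypothesis f_lin : linear f.

Lemma linD u v : f (u + v) = f u + f v.
Proof. by have := f_lin 1 u v; rewrite !scale1r. Qed.

Lemma lin0 : f 0 = 0.
Proof. by apply: (addrI (f 0)); rewrite addr0 -linD addr0. Qed.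

Lemma linZ a u : f (a *: u) = a *: f u.
Proof. by rewrite -[a *: u]addr0 f_lin lin0 addr0. Qed.

Lemma lin_sum (I : Type) (r : seq I) (F : I -> U) :
  f (\sum_(i <- r) F i) = \sum_(i <- r) f (F i).
Proof.
elim: r => [|i r IH]; first by rewrite !big_nil lin0.
by rewrite !big_cons linD IH.
Qed.

End LinearFun.

Definition bilin (A B C : lmodType K) (f : A -> B -> C) :=
  (forall a, linear (f a)) /\ (forall b, linear (f^~ b)).

Section BilinearFun.
Variables (A B C : lmodType K) (f : A -> B -> C).
Hypothesis f_bil : bilin f.

Lemma bilin0l b : f 0 b = 0. Proof. exact: (lin0 (f_bil.2 b)). Qed.
Lemma bilin0r a : f a 0 = 0. Proof. exact: (lin0 (f_bil.1 a)). Qed.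
Lemma bilinDl a a' b : f (a + a') b = f a b + f a' b. Proof. exact: (linD (f_bil.2 b)). Qed.
Lemma bilinDr a b b' : f a (b + b') = f a b + f a b'. Proof. exact: (linD (f_bil.1 a)). Qed.
Lemma bilinZl c a b : f (c *: a) b = c *: f a b. Proof. exact: (linZ (f_bil.2 b)). Qed.
Lemma bilinZr c a b : f a (c *: b) = c *: f a b. Proof. exact: (linZ (f_bil.1 a)). Qed.

Lemma bilin_suml I (r : seq I) (F : I -> A) b :
  f (\sum_(i <- r) F i) b = \sum_(i <- r) f (F i) b.
Proof. exact: (lin_sum (f_bil.2 b)). Qed.

Lemma bilin_sumr I (r : seq I) (F : I -> B) a :
  f a (\sum_(i <- r) F i) = \sum_(i <- r) f a (F i).
Proof. exact: (lin_sum (f_bil.1 a)). Qed.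

End BilinearFun.

Section BilinearClosure.
Variables (A B C D : lmodType K).

Lemma bilin_add (f g : A -> B -> C) : bilin f -> bilin g -> bilin (fun a b => f a b + g a b).
Proof.
move=> [f1 f2] [g1 g2]; split=> [a|b] c x y /=.
  by rewrite f1 g1 scalerDr addrACA.
by rewrite f2 g2 scalerDr addrACA.
Qed.

Lemma bilin_scale (c0 : K) (f : A -> B -> C) : bilin f -> bilin (fun a b => c0 *: f a b).
Proof.
move=> [f1 f2]; split=> [a|b] c x y /=.
  by rewrite f1 scalerDr !scalerA mulrC.
by rewrite f2 scalerDr !scalerA mulrC.
Qed.

Lemma bilin_compl (h : D -> A) (f : A -> B -> C) :
  linear h -> bilin f -> bilin (fun a b => f (h a) b).
Proof. by move=> hh [f1 f2]; split=> [a|b] c x y /=; rewrite ?hh ?f1 ?f2. Qed.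

Lemma bilin_compr (h : D -> B) (f : A -> B -> C) :
  linear h -> bilin f -> bilin (fun a b => f a (h b)).
Proof. by move=> hh [f1 f2]; split=> [a|b] c x y /=; rewrite ?hh ?f1 ?f2. Qed.

Lemma bilin_swap (f : A -> B -> C) : bilin f -> bilin (fun b a => f a b).
Proof. by move=> [f1 f2]; split. Qed.

Lemma bilin_pair (f : A -> B -> C) (g : A -> B -> D) : bilin f -> bilin g ->
  bilin (fun a b => (f a b, g a b) : (C * D)%type).
Proof. by move=> [f1 f2] [g1 g2]; split=> [a|b] c x y /=; rewrite ?f1 ?g1 ?f2 ?g2. Qed.

Lemma bilin_sum I (r : seq I) (F : I -> A -> B -> C) :
  (forall i, bilin (F i)) -> bilin (fun a b => \sum_(i <- r) F i a b).
Proof.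
move=> F_bil; elim: r => [|i r [IH1 IH2]].
  by split=> [a|b] c x y; rewrite !big_nil scaler0 addr0.
split=> [a|b] c x y; rewrite !big_cons.
  by rewrite IH1 ((F_bil i).1 a) scalerDr addrACA.
by rewrite IH2 ((F_bil i).2 b) scalerDr addrACA.
Qed.

End BilinearClosure.

Lemma scalerC (V : lmodType K) (a b : K) (v : V) : a *: (b *: v) = b *: (a *: v).
Proof. by rewrite !scalerA mulrC. Qed.

End Bilinear.

Section PrimitiveElements.
Variables (K : fieldType) (H : lmodType K) (q : K) (prec dot succ : H -> H -> H)
  (Delta : Hp H -> tens H).
Hypothesis HT : qtridendriform q prec dot succ.
Hypothesis HB : qtri_bialgebra q prec dot succ Delta.

Local Notation HP := (Hp H).
Local Notation one := (unit1 H).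
Local Notation qstar := (qstar q prec dot succ).
Local Notation tsucc := (tsucc q dot succ).
Local Notation starp := (starp q prec dot succ).
Local Notation coprod := (coprod q prec dot succ).
Local Notation precp := (precp prec).
Local Notation succp := (succp succ).
Local Notation dotp := (dotp dot).

Definition tsuccp (a b : HP) : H := q *: dotp a b + succp a b.

Lemma tsuccpE (a b : HP) : tsuccp a b = tsucc a.2 b.2 + a.1 *: b.2.
Proof. by rewrite /tsuccp /tsucc /dotp /succp addrA. Qed.

Lemma starpE (a b : HP) : starp a b = ((a.1 * b.1 : K^o), precp a b + tsuccp a b).
Proof.
case: a => a1 a2; case: b => b1 b2.
rewrite /Defs.starp /Defs.precp /tsuccp /Defs.dotp /Defs.succp /Defs.qstar /=.
by congr pair; rewrite [LHS](AC (2*3) ((3*2)*(4*(5*1)))).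
Qed.

Lemma bilin_prec : bilin prec. Proof. exact: qt_bil_prec HT. Qed.
Lemma bilin_dot : bilin dot. Proof. exact: qt_bil_dot HT. Qed.
Lemma bilin_succ : bilin succ. Proof. exact: qt_bil_succ HT. Qed.

Lemma bilin_tsucc : bilin tsucc.
Proof. by apply: bilin_add; [apply: bilin_scale bilin_dot | apply: bilin_succ]. Qed.

Lemma bilin_qstar : bilin qstar.
Proof.
apply: bilin_add; last exact: bilin_succ.
by apply: bilin_add; [apply: bilin_prec | apply: bilin_scale bilin_dot].
Qed.

Lemma scale_regE (c : K) (a : K^o) : c *: a = c * a :> K. Proof. by []. Qed.

Lemma linear_fst : linear (fun a : HP => a.1). Proof. by []. Qed.
Lemma linear_snd : linear (fun a : HP => a.2). Proof. by []. Qed.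

Lemma linear_inj : linear (@inj K H).
Proof. by move=> c x y; congr pair; rewrite /= /GRing.scale /= mulr0 addr0. Qed.

Lemma inj0 : inj (0 : H) = 0. Proof. by []. Qed.

Lemma Hp_decomp (a : HP) : a = a.1 *: one + inj a.2.
Proof.
case: a => a1 a2; congr pair => /=; last by rewrite scaler0 add0r.
by rewrite /GRing.scale /= mulr1 addr0.
Qed.

Lemma bilin_snd (f : H -> H -> H) : bilin f -> bilin (fun a b : HP => f a.2 b.2).
Proof.
move=> f_bil; apply: (bilin_compl (f := fun (x : H) (b : HP) => f x b.2) linear_snd).
exact: (bilin_compr (f := f) linear_snd).
Qed.

Lemma bilin_scale_fst_snd : bilin (fun a b : HP => a.1 *: b.2).
Proof.
split=> [a|b] c x y /=; first by rewrite scalerDr !scalerA mulrC.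
by rewrite scalerDl scalerA.
Qed.

Lemma bilin_precp : bilin precp.
Proof. by apply: bilin_add; [apply: bilin_snd bilin_prec | apply: bilin_swap bilin_scale_fst_snd]. Qed.

Lemma bilin_succp : bilin succp.
Proof. by apply: bilin_add; [apply: bilin_snd bilin_succ | apply: bilin_scale_fst_snd]. Qed.

Lemma bilin_dotp : bilin dotp. Proof. exact: bilin_snd bilin_dot. Qed.

Lemma bilin_tsuccp : bilin tsuccp.
Proof. by apply: bilin_add; [apply: bilin_scale bilin_dotp | apply: bilin_succp]. Qed.

Lemma bilin_starp : bilin starp.
Proof.
apply: (bilin_pair (f := fun a b : HP => (a.1 * b.1 : K^o))
   (g := fun a b : HP => a.1 *: b.2 + b.1 *: a.2 + qstar a.2 b.2)).
  split=> [a|b] c x y /=; rewrite /GRing.scale /=; first by rewrite mulrDr mulrCA.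
  by rewrite mulrDl mulrA.
apply: bilin_add; last exact: bilin_snd bilin_qstar.
by apply: bilin_add; [apply: bilin_scale_fst_snd | apply: bilin_swap bilin_scale_fst_snd].
Qed.

Lemma starp1l a : starp one a = a.
Proof.
case: a => a1 a2; congr pair => /=; first by rewrite mul1r.
by rewrite scale1r scaler0 addr0 (bilin0l bilin_qstar) addr0.
Qed.

Lemma starp1r a : starp a one = a.
Proof.
case: a => a1 a2; congr pair => /=; first by rewrite mulr1.
by rewrite scaler0 add0r scale1r (bilin0r bilin_qstar) addr0.
Qed.

Lemma precp1l b : precp one b = 0.
Proof. by rewrite /Defs.precp /= (bilin0l bilin_prec) scaler0 addr0. Qed.
Lemma precp1r a : precp a one = a.2.
Proof. by rewrite /Defs.precp /= (bilin0r bilin_prec) scale1r add0r. Qed.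
Lemma succp1l b : succp one b = b.2.
Proof. by rewrite /Defs.succp /= (bilin0l bilin_succ) scale1r add0r. Qed.
Lemma succp1r a : succp a one = 0.
Proof. by rewrite /Defs.succp /= (bilin0r bilin_succ) scaler0 addr0. Qed.
Lemma dotp1l b : dotp one b = 0.
Proof. by rewrite /Defs.dotp /= (bilin0l bilin_dot). Qed.
Lemma dotp1r a : dotp a one = 0.
Proof. by rewrite /Defs.dotp /= (bilin0r bilin_dot). Qed.
Lemma tsuccp1l b : tsuccp one b = b.2.
Proof. by rewrite /tsuccp dotp1l succp1l scaler0 add0r. Qed.
Lemma tsuccp1r a : tsuccp a one = 0.
Proof. by rewrite /tsuccp dotp1r succp1r scaler0 add0r. Qed.

Definition tens_eval (U : lmodType K) (f : HP -> HP -> U) (s : tens H) : U :=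
  \sum_(p <- s) f p.1 p.2.

Lemma tens_eqP (s t : tens H) : tens_eq s t ->
  forall (U : lmodType K) (f : HP -> HP -> U), bilin f -> tens_eval f s = tens_eval f t.
Proof. by move=> st U f [f1 f2]; apply: st. Qed.

Lemma tens_eqI (s t : tens H) :
  (forall (U : lmodType K) (f : HP -> HP -> U), bilin f -> tens_eval f s = tens_eval f t) ->
  tens_eq s t.
Proof. by move=> st U f f1 f2; apply: st; split. Qed.

Lemma tens_eq_trans (s t u : tens H) : tens_eq s t -> tens_eq t u -> tens_eq s u.
Proof. by move=> st tu; apply: tens_eqI => U f f_bil; rewrite (tens_eqP st) ?(tens_eqP tu). Qed.

Section TensEval.
Variables (U : lmodType K) (f : HP -> HP -> U).

Lemma tens_eval_cat s t : tens_eval f (s ++ t) = tens_eval f s + tens_eval f t.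
Proof. exact: big_cat. Qed.

Lemma tens_eval_cons p s : tens_eval f (p :: s) = f p.1 p.2 + tens_eval f s.
Proof. exact: big_cons. Qed.

Lemma tens_eval1 p : tens_eval f [:: p] = f p.1 p.2.
Proof. by rewrite /tens_eval big_seq1. Qed.

Lemma tens_eval_pair p p' : tens_eval f [:: p; p'] = f p.1 p.2 + f p'.1 p'.2.
Proof. by rewrite /tens_eval !big_cons big_nil addr0. Qed.

Lemma tens_eval_scale c s : bilin f -> tens_eval f (tens_scale c s) = c *: tens_eval f s.
Proof.
move=> f_bil; rewrite /tens_eval big_map scaler_sumr.
by apply: eq_bigr => p _; rewrite (bilinZl f_bil).
Qed.

Hypothesis f_bil : bilin f.

Lemma linear_tens_eval_Delta : linear (fun u => tens_eval f (Delta u)).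
Proof.
move=> c u v; rewrite (tens_eqP (qb_linear HB c u v) f_bil).
by rewrite tens_eval_cat tens_eval_scale.
Qed.

Lemma tens_eval_Delta1 : tens_eval f (Delta one) = f one one.
Proof. by rewrite (tens_eqP (qb_unit HB) f_bil) tens_eval1. Qed.

Lemma tens_eval_primitive x : primitive Delta x ->
  tens_eval f (Delta (inj x)) = f (inj x) one + f one (inj x).
Proof. by move=> px; rewrite (tens_eqP px f_bil) tens_eval_pair. Qed.

End TensEval.

Lemma Delta_decomp (a : HP) :
  tens_eq (Delta a) (tens_scale (a.1 : K) [:: (one, one)] ++ Delta (inj a.2)).
Proof.
apply: tens_eqI => U f f_bil.
rewrite {1}(Hp_decomp a) (linear_tens_eval_Delta f_bil) (tens_eval_Delta1 f_bil).
by rewrite tens_eval_cat tens_eval_scale // tens_eval1.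
Qed.

(* The counit axiom, read on first components, is [sum eps(a1) eps(a2) = eps(x) = 0]. *)
Lemma sum_counit_mul x : \sum_(p <- Delta (inj x)) (p.1.1 * p.2.1 : K) = 0.
Proof. by have := congr1 fst (qb_counit_l HB x); rewrite /= (lin_sum linear_fst). Qed.

Definition coprod_summand (opp : HP -> HP -> H) (U : lmodType K) (f : HP -> HP -> U)
    (u v : HP * HP) : U :=
  f (starp u.1 v.1) (inj (opp u.2 v.2)) + f ((u.2.1 * v.2.1 : K) *: inj (opp u.1 v.1)) one.

Lemma tens_eval_coprod opp (U : lmodType K) (f : HP -> HP -> U) s t :
  tens_eval f (coprod opp s t) = \sum_(u <- s) \sum_(v <- t) coprod_summand opp f u v.
Proof.
rewrite /tens_eval /Defs.coprod big_flatten /= big_allpairs_dep.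
by apply: eq_bigr => u _; apply: eq_bigr => v _; rewrite /coprod_term big_cons big_seq1.
Qed.

Section CoprodSummand.
Variables (opp : HP -> HP -> H) (U : lmodType K) (f : HP -> HP -> U).
Hypotheses (opp_bil : bilin opp) (f_bil : bilin f).

Lemma bilin_coprod_summandl v : bilin (fun a b => coprod_summand opp f (a, b) v).
Proof.
split=> [a|b] c x y; rewrite /coprod_summand /= !(bilinZl f_bil).
  rewrite (bilinDl opp_bil) (bilinZl opp_bil) linear_inj (f_bil.1 _) scale_regE.
  by rewrite mulrDl scalerDl -mulrA -scalerA scalerDr addrACA.
rewrite (bilinDl bilin_starp) (bilinZl bilin_starp) (f_bil.2 _).
rewrite (bilinDl opp_bil) (bilinZl opp_bil) linear_inj (f_bil.2 one).
by rewrite !scalerDr scalerC addrACA.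
Qed.

Lemma bilin_coprod_summandr u : bilin (fun a b => coprod_summand opp f u (a, b)).
Proof.
split=> [a|b] c x y; rewrite /coprod_summand /= !(bilinZl f_bil).
  rewrite (bilinDr opp_bil) (bilinZr opp_bil) linear_inj (f_bil.1 _) scale_regE.
  by rewrite mulrDr scalerDl mulrCA -scalerA scalerDr addrACA.
rewrite (bilinDr bilin_starp) (bilinZr bilin_starp) (f_bil.2 _).
rewrite (bilinDr opp_bil) (bilinZr opp_bil) linear_inj (f_bil.2 one).
by rewrite !scalerDr scalerC addrACA.
Qed.

End CoprodSummand.

Lemma coprod_tens_eq opp s s' t t' : bilin opp ->
  tens_eq s s' -> tens_eq t t' -> tens_eq (coprod opp s t) (coprod opp s' t').
Proof.
move=> opp_bil ss' tt'; apply: tens_eqI => U f f_bil; rewrite !tens_eval_coprod.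
transitivity (\sum_(u <- s') \sum_(v <- t) coprod_summand opp f u v).
  have := tens_eqP ss' (bilin_sum t (bilin_coprod_summandl opp_bil f_bil)).
  rewrite /tens_eval => e.
  rewrite (eq_bigr (fun p => \sum_(v <- t) coprod_summand opp f (p.1, p.2) v)); last by case.
  by rewrite e; apply: eq_bigr; case.
rewrite exchange_big [RHS]exchange_big.
have := tens_eqP tt' (bilin_sum s' (bilin_coprod_summandr opp_bil f_bil)).
rewrite /tens_eval => e.
rewrite (eq_bigr (fun p => \sum_(u <- s') coprod_summand opp f u (p.1, p.2))); last by case.
by rewrite e; apply: eq_bigr; case.
Qed.

Section CoprodUnit.
Variables (U : lmodType K) (f : HP -> HP -> U).
Hypothesis f_bil : bilin f.

(* Splitting both tensor factors into their scalar and H parts; the scalar-scalar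
   part drops out because [sum eps(a1) eps(a2) = 0]. *)
Lemma tens_eval_Delta_split x :
  \sum_(p <- Delta (inj x)) (f p.1 (inj p.2.2) + f (p.2.1 *: inj p.1.2) one) =
  tens_eval f (Delta (inj x)).
Proof.
have split_pair (p : HP * HP) : f p.1 (inj p.2.2) + f (p.2.1 *: inj p.1.2) one =
    f p.1 p.2 - (p.1.1 * p.2.1) *: f one one.
  case: p => a b /=; rewrite [in f a b](Hp_decomp b) (bilinDr f_bil) (bilinZr f_bil).
  rewrite [in f a one](Hp_decomp a) (bilinDl f_bil) !(bilinZl f_bil) scalerDr scalerA.
  by rewrite [b.1 * a.1]mulrC [RHS]addrC !addrA addNr add0r addrC.
under eq_bigr do rewrite split_pair.
by rewrite sumrB -scaler_suml sum_counit_mul scale0r subr0; apply: eq_bigr; case.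
Qed.

Variable opp : HP -> HP -> H.
Hypothesis opp_bil : bilin opp.

Lemma sum_coprod_summand_unitl c x : (forall w, opp one w = c *: w.2) ->
  \sum_(v <- Delta (inj x)) coprod_summand opp f (one, one) v = c *: tens_eval f (Delta (inj x)).
Proof.
move=> opp1w; rewrite -tens_eval_Delta_split scaler_sumr; apply: eq_bigr => v _.
rewrite /coprod_summand /= !opp1w starp1l mul1r !(linZ linear_inj).
by rewrite (bilinZr f_bil) scalerC !(bilinZl f_bil) scalerDr.
Qed.

Lemma sum_coprod_summand_unitr c x : (forall w, opp w one = c *: w.2) ->
  \sum_(u <- Delta (inj x)) coprod_summand opp f u (one, one) = c *: tens_eval f (Delta (inj x)).
Proof.
move=> oppw1; rewrite -tens_eval_Delta_split scaler_sumr; apply: eq_bigr => u _.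
rewrite /coprod_summand /= !oppw1 starp1r mulr1 !(linZ linear_inj).
by rewrite (bilinZr f_bil) scalerC !(bilinZl f_bil) scalerDr.
Qed.

Lemma tens_eval_coprod_Delta (a b : HP) : opp one one = 0 ->
  tens_eval f (coprod opp (Delta a) (Delta b)) =
  a.1 *: \sum_(v <- Delta (inj b.2)) coprod_summand opp f (one, one) v +
  b.1 *: \sum_(u <- Delta (inj a.2)) coprod_summand opp f u (one, one) +
  tens_eval f (coprod opp (Delta (inj a.2)) (Delta (inj b.2))).
Proof.
move=> opp11; have bil_l := bilin_coprod_summandl opp_bil f_bil.
have bil_r := bilin_coprod_summandr opp_bil f_bil.
have summand11 : coprod_summand opp f (one, one) (one, one) = 0.
  by rewrite /coprod_summand /= opp11 inj0 scaler0 (bilin0r f_bil) (bilin0l f_bil) addr0.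
rewrite (tens_eqP (coprod_tens_eq opp_bil (Delta_decomp a) (Delta_decomp b)) f_bil).
rewrite !tens_eval_coprod /tens_scale /= !big_cons.
rewrite (bilinZl (bil_l _)) (bilinZl (bil_r _)) summand11 !scaler0 add0r.
under eq_bigr do rewrite (bilinZl (bil_l _)).
under [X in _ + X]eq_bigr do rewrite big_cons (bilinZl (bil_r _)).
by rewrite !scaler_sumr big_split addrA.
Qed.

End CoprodUnit.

Lemma precp_inj x y : precp (inj x) (inj y) = prec x y.
Proof. by rewrite /Defs.precp /= scale0r addr0. Qed.
Lemma succp_inj x y : succp (inj x) (inj y) = succ x y.
Proof. by rewrite /Defs.succp /= scale0r addr0. Qed.
Lemma tsuccp_inj x y : tsuccp (inj x) (inj y) = tsucc x y.
Proof. by rewrite tsuccpE scale0r addr0. Qed.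

Lemma Delta_Hp_extend (opp : HP -> HP -> H) (cl cr : K) : bilin opp ->
  (forall w, opp one w = cl *: w.2) -> (forall w, opp w one = cr *: w.2) ->
  (forall x y, tens_eq (Delta (inj (opp (inj x) (inj y))))
                       (coprod opp (Delta (inj x)) (Delta (inj y)))) ->
  forall a b, tens_eq (Delta (inj (opp a b))) (coprod opp (Delta a) (Delta b)).
Proof.
move=> opp_bil opp1w oppw1 Delta_opp a b; apply: tens_eqI => U f f_bil.
have opp_decomp : opp a b = (a.1 * cl) *: b.2 + (b.1 * cr) *: a.2 + opp (inj a.2) (inj b.2).
  rewrite {1}[a]Hp_decomp {1}[b]Hp_decomp (bilinDl opp_bil) !(bilinDr opp_bil).
  rewrite !(bilinZl opp_bil) !(bilinZr opp_bil) !opp1w oppw1 /=.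
  by rewrite !scaler0 add0r !scalerA addrA.
have opp11 : opp one one = 0 by rewrite opp1w scaler0.
rewrite (tens_eval_coprod_Delta f_bil opp_bil _ _ opp11).
rewrite (sum_coprod_summand_unitl f_bil _ opp1w) (sum_coprod_summand_unitr f_bil _ oppw1).
rewrite -(tens_eqP (Delta_opp _ _) f_bil) opp_decomp !(linD linear_inj) !(linZ linear_inj).
by rewrite !(linD (linear_tens_eval_Delta f_bil)) !(linZ (linear_tens_eval_Delta f_bil)) !scalerA.
Qed.

Lemma Delta_precp (a b : HP) :
  tens_eq (Delta (inj (precp a b))) (coprod precp (Delta a) (Delta b)).
Proof.
apply: (Delta_Hp_extend (cl := 0) (cr := 1) bilin_precp).
- by move=> w; rewrite precp1l scale0r.
- by move=> w; rewrite precp1r scale1r.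
- by move=> x y; rewrite precp_inj; exact: (qb_prec HB).
Qed.

Lemma Delta_succp (a b : HP) :
  tens_eq (Delta (inj (succp a b))) (coprod succp (Delta a) (Delta b)).
Proof.
apply: (Delta_Hp_extend (cl := 1) (cr := 0) bilin_succp).
- by move=> w; rewrite succp1l scale1r.
- by move=> w; rewrite succp1r scale0r.
- by move=> x y; rewrite succp_inj; exact: (qb_succ HB).
Qed.

Lemma Delta_dotp (a b : HP) :
  tens_eq (Delta (inj (dotp a b))) (coprod dotp (Delta a) (Delta b)).
Proof.
apply: (Delta_Hp_extend (cl := 0) (cr := 0) bilin_dotp).
- by move=> w; rewrite dotp1l scale0r.
- by move=> w; rewrite dotp1r scale0r.
- exact: (qb_dot HB).
Qed.

Lemma coprod_summand_tsuccp (U : lmodType K) (f : HP -> HP -> U) u v : bilin f ->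
  coprod_summand tsuccp f u v = q *: coprod_summand dotp f u v + coprod_summand succp f u v.
Proof.
move=> f_bil; rewrite /coprod_summand /tsuccp !(linD linear_inj) !(linZ linear_inj).
rewrite (bilinDr f_bil) (bilinZr f_bil) !(bilinZl f_bil) (bilinDl f_bil) (bilinZl f_bil).
by rewrite !scalerDr scalerC addrACA.
Qed.

Lemma Delta_tsuccp (a b : HP) :
  tens_eq (Delta (inj (tsuccp a b))) (coprod tsuccp (Delta a) (Delta b)).
Proof.
apply: (Delta_Hp_extend (cl := 1) (cr := 0) bilin_tsuccp).
- by move=> w; rewrite tsuccp1l scale1r.
- by move=> w; rewrite tsuccp1r scale0r.
move=> x y; apply: tens_eqI => U f f_bil.
rewrite {1}/tsuccp (linD linear_inj) (linZ linear_inj).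
rewrite (linD (linear_tens_eval_Delta f_bil)) (linZ (linear_tens_eval_Delta f_bil)).
rewrite (tens_eqP (Delta_dotp _ _) f_bil) (tens_eqP (Delta_succp _ _) f_bil).
rewrite !tens_eval_coprod scaler_sumr -big_split; apply: eq_bigr => u _.
rewrite scaler_sumr -big_split; apply: eq_bigr => v _.
by rewrite coprod_summand_tsuccp.
Qed.

Section CoprodSummandSimple.
Variables (opp : HP -> HP -> H) (U : lmodType K) (f : HP -> HP -> U).
Hypothesis f_bil : bilin f.

Lemma coprod_summand_injl a x v :
  coprod_summand opp f (a, inj x) v = f (starp a v.1) (inj (opp (inj x) v.2)).
Proof. by rewrite /coprod_summand /= mul0r scale0r (bilin0l f_bil) addr0. Qed.

Lemma coprod_summand_injr u a x :
  coprod_summand opp f u (a, inj x) = f (starp u.1 a) (inj (opp u.2 (inj x))).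
Proof. by rewrite /coprod_summand /= mulr0 scale0r (bilin0l f_bil) addr0. Qed.

Lemma coprod_summand_unitl a b c : (forall w, opp one w = 0) ->
  coprod_summand opp f (a, one) (b, c) = c.1 *: f (inj (opp a b)) one.
Proof.
move=> opp1w; rewrite /coprod_summand /= opp1w inj0 (bilin0r f_bil) add0r.
by rewrite mul1r (bilinZl f_bil).
Qed.

Lemma coprod_summand_unitr a b c : (forall w, opp w one = 0) ->
  coprod_summand opp f (a, c) (b, one) = c.1 *: f (inj (opp a b)) one.
Proof.
move=> oppw1; rewrite /coprod_summand /= oppw1 inj0 (bilin0r f_bil) add0r.
by rewrite mulr1 (bilinZl f_bil).
Qed.

End CoprodSummandSimple.

Definition tens_sum (N : nat) (A B : nat -> HP) : tens H := [seq (A j, B j) | j <- iota 0 N].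

Lemma big_tens_sum (U : lmodType K) N A B (F : HP * HP -> U) :
  \sum_(v <- tens_sum N A B) F v = \sum_(0 <= j < N) F (A j, B j).
Proof. by rewrite big_map /index_iota subn0. Qed.

Lemma tens_eval_tens_sum (U : lmodType K) (f : HP -> HP -> U) N A B :
  tens_eval f (tens_sum N A B) = \sum_(0 <= j < N) f (A j) (B j).
Proof. exact: big_tens_sum. Qed.

Lemma sum_take_nil (T : Type) (U : lmodType K) (l : seq T) (F : nat -> U) :
  \sum_(0 <= j < (size l).+1) ((size (take j l) == 0)%:R : K) *: F j = F 0%N.
Proof.
rewrite big_nat_recl // take0 /= scale1r big1_seq ?addr0 // => j /andP [_].
by rewrite mem_index_iota => /andP [_ lt_j]; rewrite size_takel // scale0r.
Qed.

Lemma sum_drop_nil (T : Type) (U : lmodType K) (l : seq T) (F : nat -> U) :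
  \sum_(0 <= j < (size l).+1) ((size (drop j l) == 0)%:R : K) *: F j = F (size l).
Proof.
rewrite big_nat_recr //= drop_size /= scale1r big1_seq ?add0r // => j /andP [_].
by rewrite mem_index_iota => /andP [_ lt_j]; rewrite size_drop subn_eq0 leqNgt lt_j scale0r.
Qed.

Fixpoint wprecp (l : seq H) : HP :=
  if l is y :: l' then inj (precp (inj y) (wprecp l')) else one.

Definition wsuccp (l : seq H) : HP := foldl (fun a z => inj (tsuccp a (inj z))) one l.

Lemma wsuccp_rcons l z : wsuccp (rcons l z) = inj (tsuccp (wsuccp l) (inj z)).
Proof. by rewrite /wsuccp foldl_rcons. Qed.

Lemma wprecp_fst l : (wprecp l).1 = (size l == 0)%:R.
Proof. by case: l. Qed.

Lemma wsuccp_fst l : (wsuccp l).1 = (size l == 0)%:R.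
Proof. by case/lastP: l => [|l z] //; rewrite wsuccp_rcons size_rcons. Qed.

Lemma wprecp_cons y l : wprecp (y :: l) = inj (wprec prec y l).
Proof.
elim: l y => [|z l IH] y /=; first by rewrite precp1r.
by rewrite -/(wprecp (z :: l)) IH precp_inj.
Qed.

Lemma wsuccp_cons z r : wsuccp (z :: r) = inj (wsucc q dot succ z r).
Proof.
rewrite /wsuccp /= tsuccp1l /wsucc.
by elim: r z => [|w r IH] z //=; rewrite -IH tsuccp_inj.
Qed.

Definition all_primitive (zs : seq H) := forall z, z \in zs -> primitive Delta z.

Lemma all_primitive_take n zs : all_primitive zs -> all_primitive (take n zs).
Proof. by move=> pzs z /mem_take; apply: pzs. Qed.

Lemma all_primitive_drop n zs : all_primitive zs -> all_primitive (drop n zs).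
Proof. by move=> pzs z /mem_drop; apply: pzs. Qed.

Lemma Delta_wprecp ys : all_primitive ys ->
  tens_eq (Delta (wprecp ys))
          (tens_sum (size ys).+1 (fun j => wprecp (drop j ys)) (fun j => wprecp (take j ys))).
Proof.
elim: ys => [|y l IH] pyl; first exact: (qb_unit HB).
have py : primitive Delta y by apply: pyl; rewrite inE eqxx.
have pl : all_primitive l by move=> z lz; apply: pyl; rewrite inE lz orbT.
apply: tens_eq_trans (Delta_precp _ _) _.
apply: tens_eq_trans (coprod_tens_eq bilin_precp py (IH pl)) _.
apply: tens_eqI => U f f_bil.
rewrite tens_eval_coprod big_cons big_seq1 !big_tens_sum tens_eval_tens_sum.
under eq_bigr do rewrite (coprod_summand_unitl f_bil _ _ _ precp1l) wprecp_fst.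
under [X in _ + X]eq_bigr do rewrite (coprod_summand_injl _ f_bil) starp1l.
by rewrite sum_take_nil [RHS]big_nat_recl // drop0 take0.
Qed.

Lemma Delta_wsuccp ys : all_primitive ys ->
  tens_eq (Delta (wsuccp ys))
          (tens_sum (size ys).+1 (fun j => wsuccp (take j ys)) (fun j => wsuccp (drop j ys))).
Proof.
elim/last_ind: ys => [|l z IH] plz; first exact: (qb_unit HB).
have pz : primitive Delta z by apply: plz; rewrite mem_rcons inE eqxx.
have pl : all_primitive l by move=> x lx; apply: plz; rewrite mem_rcons inE lx orbT.
rewrite wsuccp_rcons.
apply: tens_eq_trans (Delta_tsuccp _ _) _.
apply: tens_eq_trans (coprod_tens_eq bilin_tsuccp (IH pl) pz) _.
apply: tens_eqI => U f f_bil.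
rewrite tens_eval_coprod big_tens_sum tens_eval_tens_sum.
under eq_bigr do rewrite big_cons big_seq1 (coprod_summand_unitr f_bil _ _ _ tsuccp1r)
  (coprod_summand_injr _ f_bil) starp1r wsuccp_fst.
rewrite big_split /= sum_drop_nil take_size size_rcons [RHS]big_nat_recr //=.
rewrite take_oversize ?size_rcons // drop_oversize ?size_rcons // -wsuccp_rcons addrC.
congr (_ + _); apply: eq_big_nat => j /andP [_ lt_j].
by rewrite -cats1 takel_cat // cats1 drop_rcons // wsuccp_rcons.
Qed.

Lemma precp_inj_assoc y (b c : HP) :
  precp (inj (precp (inj y) b)) c = precp (inj y) (starp b c).
Proof.
case: b => b1 b2; case: c => c1 c2; rewrite /Defs.precp /Defs.starp /=.
have ax1 : prec (prec y b2) c2 = prec y (qstar b2 c2).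
  by rewrite (qt_ax1 HT) /Defs.qstar addrAC.
rewrite (bilinDl bilin_prec) ax1 (bilinZl bilin_prec) !(bilinDr bilin_prec).
rewrite !(bilinZr bilin_prec) scalerDr scalerA [c1 * b1]mulrC !addrA.
by congr (_ + _); rewrite -[LHS]addrA [LHS]addrC !addrA.
Qed.

Lemma tsucc_qstar_assoc x y z : tsucc (qstar x y) z = tsucc x (tsucc y z).
Proof.
have ax3 : succ (prec x y + q *: dot x y + succ x y) z = succ x (succ y z).
  by rewrite -(qt_ax3 HT) addrAC.
rewrite /Defs.tsucc /Defs.qstar ax3 !(bilinDl bilin_dot) (bilinZl bilin_dot).
rewrite (qt_ax6 HT) (qt_ax4 HT) (qt_ax5 HT) !(bilinDr bilin_dot) !(bilinZr bilin_dot).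
rewrite !(bilinDr bilin_succ) !(bilinZr bilin_succ) !scalerDr !addrA.
by congr (_ + _ + _); rewrite addrC.
Qed.

Lemma tsuccp_assoc (a b : HP) z :
  tsuccp a (inj (tsuccp b (inj z))) = tsuccp (starp a b) (inj z).
Proof.
case: a => a1 a2; case: b => b1 b2; rewrite !tsuccpE /Defs.starp /=.
rewrite (bilinDr bilin_tsucc) (bilinZr bilin_tsucc) (bilinDl bilin_tsucc).
rewrite tsucc_qstar_assoc (bilinDl bilin_tsucc) (bilinZl bilin_tsucc (a1 : K)).
rewrite (bilinZl bilin_tsucc (b1 : K)) [a1 *: (_ + _)]scalerDr scalerA.
by rewrite [LHS](AC (2*2) (3*2*1*4)).
Qed.

Definition alt_sum (V : lmodType K) (op : HP -> HP -> V) (a : seq H) : V :=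
  \sum_(0 <= l < (size a).+1)
     (-1) ^+ (size a - l) *: op (wprecp (take l a)) (wsuccp (drop l a)).

Lemma alt_sum_nil (V : lmodType K) (op : HP -> HP -> V) : alt_sum op [::] = op one one.
Proof. by rewrite /alt_sum big_nat1 expr0 scale1r. Qed.

Lemma alt_sum_starp_snd a : (alt_sum starp a).2 = alt_sum precp a + alt_sum tsuccp a.
Proof.
rewrite /alt_sum (lin_sum linear_snd) -big_split.
by apply: eq_bigr => l _; rewrite starpE /= scalerDr.
Qed.

Lemma alt_sum_starp_fst a : (0 < size a)%N -> (alt_sum starp a).1 = 0.
Proof.
move=> a_gt0; rewrite /alt_sum (lin_sum linear_fst).
transitivity (\sum_(0 <= l < (size a).+1) ((size (take l a) == 0)%:R : K) *:
    ((-1) ^+ (size a - l) * (wsuccp (drop l a)).1 : K^o)).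
  by apply: eq_bigr => l _; rewrite starpE /= wprecp_fst !scale_regE mulrCA.
by rewrite sum_take_nil /= drop0 wsuccp_fst; case: (size a) a_gt0 => // n _; rewrite mulr0.
Qed.

Lemma alt_sum_precp_cons y a : alt_sum precp (y :: a) = precp (inj y) (alt_sum starp a).
Proof.
rewrite /alt_sum big_nat_recl //= precp1l scaler0 add0r.
rewrite (bilin_sumr bilin_precp); apply: eq_bigr => l _.
by rewrite subSS (bilinZr bilin_precp) precp_inj_assoc.
Qed.

Lemma alt_sum_tsuccp_rcons a z :
  alt_sum tsuccp (rcons a z) = - tsuccp (alt_sum starp a) (inj z).
Proof.
rewrite /alt_sum size_rcons big_nat_recr //= drop_oversize ?size_rcons //.
rewrite tsuccp1r scaler0 addr0 (bilin_suml bilin_tsuccp) -sumrN.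
apply: eq_big_nat => l /andP [_ lt_l].
rewrite -cats1 takel_cat // cats1 drop_rcons // wsuccp_rcons tsuccp_assoc.
by rewrite subSn // exprS (bilinZl bilin_tsuccp) mulN1r scaleNr.
Qed.

Lemma alt_sum_starp_eq0 a : (0 < size a)%N -> alt_sum starp a = 0.
Proof.
move=> a_gt0; have [n] : exists n, size a = n.+1 by exists (size a).-1; rewrite prednK.
elim: n a a_gt0 => [|n IH] a a_gt0 size_a.
all: suff snd0 : (alt_sum starp a).2 = 0.
all: try by move: (alt_sum_starp_fst a_gt0) snd0; case: (alt_sum _ _) => /= ? ? -> ->.
all: case: a a_gt0 size_a => // y a1 _ [size_a1].
all: rewrite alt_sum_starp_snd alt_sum_precp_cons (lastI y a1) alt_sum_tsuccp_rcons.
  by rewrite (size0nil size_a1) alt_sum_nil starp1l precp1r tsuccp1l subrr.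
rewrite !IH ?size_belast ?size_a1 //.
by rewrite (bilin0r bilin_precp) (bilin0l bilin_tsuccp) oppr0 addr0.
Qed.

Definition brace_left (x : H) (Y : seq H) : HP := inj (tsuccp (wprecp Y) (inj x)).

(* (ω_<(z_1..z_j) ~> x) < ω_~>(z_(m+1)..z_n); the i-th brace term is [brace_cut x zs i i]. *)
Definition brace_cut (x : H) (zs : seq H) (j m : nat) : HP :=
  inj (precp (brace_left x (take j zs)) (wsuccp (drop m zs))).

Definition split_star (zs : seq H) (j i m : nat) : HP :=
  starp (wprecp (drop j (take i zs))) (wsuccp (drop i (take m zs))).

Lemma brace_termE x zs i : inj (brace_term q prec dot succ x zs i) = brace_cut x zs i i.
Proof.
rewrite /brace_term /brace_cut /brace_left.
have -> : (if take i zs is y :: l' then tsucc (wprec prec y l') x else x) =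
          tsuccp (wprecp (take i zs)) (inj x).
  case: (take i zs) => [|y l']; first by rewrite /= tsuccp1l.
  by rewrite wprecp_cons tsuccp_inj.
case: (drop i zs) => [|z r']; first by rewrite /= precp1r.
by rewrite wsuccp_cons precp_inj.
Qed.

Lemma inj_M1n x zs : inj (M1n q prec dot succ x zs) =
  \sum_(0 <= i < (size zs).+1) (-1) ^+ (size zs - i) *: brace_cut x zs i i.
Proof.
rewrite /M1n (lin_sum linear_inj) big_mkord; apply: eq_bigr => i _.
by rewrite (linZ linear_inj) brace_termE.
Qed.

Lemma big_nat_widen_mkcond (V : zmodType) (a b N : nat) (F : nat -> V) : (b <= N)%N ->
  \sum_(a <= i < b) F i = \sum_(a <= i < N) (if (i < b)%N then F i else 0).
Proof. by move=> bN; rewrite (big_nat_widen a b N) // big_mkcond. Qed.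

Lemma big_nat_widenl_mkcond (V : zmodType) (a N : nat) (F : nat -> V) :
  \sum_(a <= i < N) F i = \sum_(0 <= i < N) (if (a <= i)%N then F i else 0).
Proof. by rewrite (big_nat_widenl a 0) // big_mkcond. Qed.

Lemma Delta_brace_left x Y : primitive Delta x -> all_primitive Y ->
  tens_eq (Delta (brace_left x Y))
    ((brace_left x Y, one) ::
       tens_sum (size Y).+1 (fun j => wprecp (drop j Y)) (fun j => brace_left x (take j Y))).
Proof.
move=> px pY; apply: tens_eq_trans (Delta_tsuccp _ _) _.
apply: tens_eq_trans (coprod_tens_eq bilin_tsuccp (Delta_wprecp pY) px) _.
apply: tens_eqI => U f f_bil.
rewrite tens_eval_coprod big_tens_sum tens_eval_cons tens_eval_tens_sum.
under eq_bigr do rewrite big_cons big_seq1 (coprod_summand_unitr f_bil _ _ _ tsuccp1r)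
  (coprod_summand_injr _ f_bil) starp1r wprecp_fst.
by rewrite big_split /= sum_take_nil drop0.
Qed.

Lemma sum_split_star zs j m : (j <= m <= size zs)%N ->
  \sum_(j <= i < m.+1) (-1) ^+ (size zs - i) *: split_star zs j i m =
  (-1) ^+ (size zs - m) *: alt_sum starp (drop j (take m zs)).
Proof.
move=> /andP [le_jm le_mn]; set a := drop j (take m zs).
have size_a : size a = (m - j)%N by rewrite size_drop size_takel.
rewrite /alt_sum size_a scaler_sumr -[X in \sum_(X <= _ < _) _ = _]add0n big_addn.
rewrite subSn //; apply: eq_big_nat => l /andP [_ lt_l]; rewrite scalerA -exprD.
have le_ljm : (l + j <= m)%N by lia.
have -> : (size zs - (l + j) = size zs - m + (m - j - l))%N by lia.
by rewrite /split_star /a take_drop take_takel // drop_drop.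
Qed.

Lemma sum_alt_split_star zs j m : (m <= size zs)%N ->
  \sum_(0 <= i < (size zs).+1)
     (if (j <= i <= m)%N then (-1) ^+ (size zs - i) *: split_star zs j i m else 0) =
  if j == m then (-1) ^+ (size zs - j) *: one else 0.
Proof.
move=> le_mn.
transitivity (\sum_(j <= i < m.+1) (-1) ^+ (size zs - i) *: split_star zs j i m).
  rewrite (@big_nat_widen_mkcond _ j m.+1 (size zs).+1) // big_nat_widenl_mkcond.
  by apply: eq_bigr => i _; case: (j <= i)%N.
case: (ltngtP j m) => [lt_jm | lt_mj | <-].
- rewrite sum_split_star ?(ltnW lt_jm) // alt_sum_starp_eq0 ?scaler0 //.
  by rewrite size_drop size_takel // subn_gt0.
- by rewrite big_geq.
- have drop_nil : drop j (take j zs) = [::].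
    by rewrite drop_oversize // size_take_min geq_minl.
  by rewrite big_nat1 /split_star drop_nil starp1l.
Qed.

Section BraceCoproduct.
Variables (x : H) (zs : seq H).
Hypotheses (px : primitive Delta x) (pzs : all_primitive zs).
Variables (U : lmodType K) (f : HP -> HP -> U).
Hypothesis f_bil : bilin f.
Local Notation n := (size zs).

Lemma tens_eval_Delta_brace_cut i : (i <= n)%N ->
  tens_eval f (Delta (brace_cut x zs i i)) = f (brace_cut x zs i i) one +
    \sum_(0 <= j < n.+1) \sum_(0 <= m < n.+1)
      (if (j <= i <= m)%N then f (split_star zs j i m) (brace_cut x zs j m) else 0).
Proof.
move=> le_in; rewrite /brace_cut (tens_eqP (Delta_precp _ _) f_bil).
rewrite (tens_eqP (coprod_tens_eq bilin_precp (Delta_brace_left px (@all_primitive_take i _ pzs))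
  (Delta_wsuccp (@all_primitive_drop i _ pzs))) f_bil).
rewrite tens_eval_coprod big_cons !big_tens_sum.
under eq_bigr do rewrite (coprod_summand_unitl f_bil _ _ _ precp1l) wsuccp_fst.
rewrite sum_drop_nil take_size (size_takel le_in); congr (_ + _).
rewrite (@big_nat_widen_mkcond _ 0 i.+1 n.+1) //; apply: eq_bigr => j _.
case: (leqP j i) => [le_ji | lt_ij]; last first.
  by rewrite ltnS leqNgt lt_ij /= big1_eq.
rewrite ltnS le_ji /= big_tens_sum size_drop -big_nat_widenl_mkcond.
rewrite -[X in _ = \sum_(X <= _ < _) _]add0n big_addn subSn //; apply: eq_bigr => k _.
rewrite (coprod_summand_injl _ f_bil) /split_star /= take_drop drop_drop.
by rewrite (take_takel _ le_ji).
Qed.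
Lemma tens_eval_Delta_M1n :
  tens_eval f (Delta (inj (M1n q prec dot succ x zs))) =
  f (inj (M1n q prec dot succ x zs)) one + f one (inj (M1n q prec dot succ x zs)).
Proof.
pose c i : K := (-1) ^+ (n - i).
have Delta_cut i : (0 <= i < n.+1)%N ->
    tens_eval f (Delta (c i *: brace_cut x zs i i)) =
    f (c i *: brace_cut x zs i i) one + \sum_(0 <= j < n.+1) \sum_(0 <= m < n.+1)
      f (if (j <= i <= m)%N then c i *: split_star zs j i m else 0) (brace_cut x zs j m).
  move=> lt_in; rewrite (linZ (linear_tens_eval_Delta f_bil)) tens_eval_Delta_brace_cut //.
  rewrite scalerDr (bilinZl f_bil) scaler_sumr; congr (_ + _); apply: eq_bigr => j _.
  rewrite scaler_sumr; apply: eq_bigr => m _.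
  by case: ifP; rewrite ?(bilinZl f_bil) ?(bilin0l f_bil) ?scaler0.
rewrite inj_M1n (lin_sum (linear_tens_eval_Delta f_bil)) (bilin_suml f_bil) (bilin_sumr f_bil).
rewrite (eq_big_nat _ _ Delta_cut) big_split /=; congr (_ + _).
rewrite exchange_big_nat; under eq_bigr do rewrite exchange_big_nat.
transitivity (\sum_(0 <= j < n.+1) \sum_(0 <= m < n.+1)
    f (if j == m then c j *: one else 0) (brace_cut x zs j m)).
  apply: eq_bigr => j _; apply: eq_big_nat => m /andP [_ lt_mn].
  by rewrite -(bilin_suml f_bil) sum_alt_split_star.
apply: eq_big_nat => j /andP [_ lt_jn].
transitivity (\sum_(0 <= m < n.+1 | m == j) c j *: f one (brace_cut x zs j m)).
  rewrite [RHS]big_mkcond; apply: eq_bigr => m _; rewrite eq_sym.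
  by case: eqP => [->|_]; rewrite ?(bilinZl f_bil) ?(bilin0l f_bil).
by rewrite big_nat1_eq lt_jn (bilinZr f_bil).
Qed.

End BraceCoproduct.

Lemma M1n_primitive x zs : primitive Delta x -> all_primitive zs ->
  primitive Delta (M1n q prec dot succ x zs).
Proof.
by move=> px pzs; apply: tens_eqI => U f f_bil; rewrite tens_eval_Delta_M1n // tens_eval_pair.
Qed.

Lemma dot_primitive x y : primitive Delta x -> primitive Delta y -> primitive Delta (dot x y).
Proof.
move=> px py; apply: tens_eqI => U f f_bil.
rewrite (tens_eqP (qb_dot HB x y) f_bil) (tens_eqP (coprod_tens_eq bilin_dotp px py) f_bil).
rewrite tens_eval_coprod !big_cons !big_nil /coprod_summand /= !dotp1l !dotp1r.
rewrite !inj0 !(bilin0r f_bil) !scaler0 !(bilin0l f_bil) mul1r scale1r tens_eval_pair /=.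
by rewrite starp1l !add0r !addr0.
Qed.

Lemma primitive0 : primitive Delta 0.
Proof.
apply: tens_eqI => U f f_bil.
by rewrite inj0 (lin0 (linear_tens_eval_Delta f_bil)) tens_eval_pair (bilin0l f_bil) (bilin0r f_bil) addr0.
Qed.

Lemma primitiveZD c u v : primitive Delta u -> primitive Delta v -> primitive Delta (c *: u + v).
Proof.
move=> pu pv; apply: tens_eqI => U f f_bil.
rewrite linear_inj (linear_tens_eval_Delta f_bil) !tens_eval_primitive // tens_eval_pair /=.
by rewrite (bilinDl f_bil) (bilinZl f_bil) (bilinDr f_bil) (bilinZr f_bil) scalerDr addrACA.
Qed.

End PrimitiveElements.

Theorem lemma2p3 (K : fieldType) (H : lmodType K) (q : K)
    (prec dot succ : H -> H -> H) (Delta : Hp H -> tens H) :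
  qtridendriform q prec dot succ ->
  qtri_bialgebra q prec dot succ Delta ->
  (forall (x : H) (zs : seq H),
      primitive Delta x -> (forall z, z \in zs -> primitive Delta z) ->
      primitive Delta (M1n q prec dot succ x zs)) /\
  (forall x y : H, primitive Delta x -> primitive Delta y ->
      primitive Delta (dot x y)) /\
  (primitive Delta 0 /\
   forall (c : K) (u v : H), primitive Delta u -> primitive Delta v ->
      primitive Delta (c *: u + v)).
Proof.
move=> HT HB; split; first exact: (M1n_primitive HT HB).
split; first exact: (dot_primitive HT HB).
by split; [exact: (primitive0 HB) | exact: (primitiveZD HB)].
Qed.
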